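(* Let $n\geq 1$ and let $a_1,\ldots,a_n$ be nonzero integers such that $a_i$ is even for every even index $i$. Suppose the continued fraction \[[a_1,\ldots,a_n]=a_1+\cfrac{1}{a_2+\cfrac{1}{\cdots+\cfrac{1}{a_n}}}\] is well defined (no division by zero occurs) and equals $p/q$, where $p,q$ are coprime integers with $q\neq 0$. Then $n$ is even if and only if $q$ is even.
   Context: Such a continued fraction $[a_1,\ldots,a_n]$ (nonzero integer entries, with all entries in even positions even) is called a semi-even expansion of the rational number it represents. *)

From mathcomp Require Import all_boot all_order all_algebra.
Set Implicit Arguments. Unset Strict Implicit. Unset Printing Implicit Defensive.
Import Order.TTheory GRing.Theory Num.Theory.
Local Open Scope ring_scope.

Fixpoint cf_value (s : seq int) : option rat :=
  match s with
  | [::] => None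
  | [:: a] => Some (a%:~R)
  | a :: s' =>
      match cf_value s' with
      | Some x => if x == 0 then None else Some (a%:~R + x^-1)
      | None => None
      end
  end.

From mathcomp Require Import all_boot all_order all_algebra ring.
Import Order.TTheory GRing.Theory Num.Theory.
Local Open Scope ring_scope.

(* Write [a_1, ..., a_n] = N/D with the continuants N, D obtained from the
   matrix product [[a_1, 1], [1, 0]] ... [[a_n, 1], [1, 0]]; its determinant
   is +-1, so N/D is in lowest terms and D = +-q.  If a_(i+1) is even, then
   the denominator of [a_i, a_(i+1), ...] is congruent mod 2 to that of
   [a_(i+2), ...], so for a semi-even expansion the parity of D only depends
   on the parity of n: D is even for [] (D = 0) and odd for [a] (D = 1). *)

Fixpoint cf_frac (s : seq int) : int * int :=
  match s with
  | [::] => (1, 0)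
  | a :: t => (a * (cf_frac t).1 + (cf_frac t).2, (cf_frac t).1)
  end.

Definition semi_even (s : seq int) : Prop :=
  forall j : nat, (j < size s)%N -> odd j -> (2 %| s`_j)%Z.

Lemma cf_value_cons a t : t != [::] ->
  cf_value (a :: t) =
    if cf_value t is Some x then
      if x == 0 then None else Some (a%:~R + x^-1)
    else None.
Proof. by case: t. Qed.

Lemma cf_value_frac s x : cf_value s = Some x ->
  (cf_frac s).2 != 0 /\ x = (cf_frac s).1%:~R / (cf_frac s).2%:~R.
Proof.
elim: s x => [|a t IH] x //.
have [-> [<-]|t_neq0] := eqVneq t [::]; first by rewrite /= mulr1 addr0 divr1.
rewrite cf_value_cons //=.
case: (cf_value t) IH => [y|] // /(_ y erefl) [den_neq0 ->].
case: eqP => // y_neq0 [<-].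
have num_neq0 : (cf_frac t).1 != 0.
  by apply: contra_not_neq y_neq0 => ->; rewrite mul0r.
split=> //.
have num_neq0R : (cf_frac t).1%:~R != 0 :> rat by rewrite intr_eq0.
have den_neq0R : (cf_frac t).2%:~R != 0 :> rat by rewrite intr_eq0.
by rewrite invf_div rmorphD rmorphM /=; field.
Qed.

Lemma coprimez_cf_frac s : coprimez (cf_frac s).1 (cf_frac s).2.
Proof.
elim: s => [|a s /coprimezP [[u v] /= Bezout]] /=; apply/coprimezP.
  by exists (1, 0); rewrite /= mulr1 mulr0 addr0.
by exists (v, u - v * a); rewrite /= -Bezout; ring.
Qed.

Lemma semi_even_cons2 a b t : semi_even [:: a, b & t] -> (2 %| b)%Z /\ semi_even t.
Proof.
move=> ev; split=> [|j j_lt j_odd]; first exact: (ev 1%N).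
by apply: (ev j.+2); rewrite //= negbK.
Qed.

Lemma dvd2_cf_den s : semi_even s -> (2 %| (cf_frac s).2)%Z = ~~ odd (size s).
Proof.
have [n] := ubnP (size s); elim: n s => // n IH [|a [|b t]] //= size_lt.
move=> /semi_even_cons2 [b_even t_even].
rewrite negbK -IH //; last exact: ltnW size_lt.
by rewrite rpredDl // dvdz_mulr.
Qed.

Lemma coprimez_frac_absz (p q m n : int) :
  coprimez p q -> coprimez m n -> q != 0 -> n != 0 ->
  p%:~R / q%:~R = m%:~R / n%:~R :> rat -> `|q|%N = `|n|%N.
Proof.
move=> cop_pq cop_mn q_neq0 n_neq0 /(congr1 denq).
rewrite !coprimeq_den // (negPf q_neq0) (negPf n_neq0) -!abszE.
by case.
Qed.

(* s = [:: a_1; ...; a_n]; the 0-based index j corresponds to a_(j+1),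
   so "a_i even for even i" reads "s`_j even for odd j". *)
Theorem proposition4 (s : seq int) (p q : int) :
  (1 <= size s)%N ->
  all (fun a => a != 0) s ->
  (forall j : nat, (j < size s)%N -> odd j -> (2 %| s`_j)%Z) ->
  q != 0 ->
  coprimez p q ->
  cf_value s = Some (p%:~R / q%:~R) ->
  (~~ odd (size s) <-> (2 %| q)%Z).
Proof.
(* Neither n >= 1 nor the nonzero entries are used: well-definedness suffices. *)
move=> _ _ s_even q_neq0 cop_pq /cf_value_frac [den_neq0 pq_eq].
have q_den : `|q|%N = `|(cf_frac s).2|%N.
  exact: coprimez_frac_absz cop_pq (coprimez_cf_frac s) q_neq0 den_neq0 pq_eq.
by rewrite dvdzE q_den -dvdzE dvd2_cf_den.
Qed.
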